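(* Let $L$ be a Stonean locale. Restriction along the inclusion of posets $\mathrm{COpen}(L)\to L$ is a bijection from the set of normal valuations on $L$ to the set of continuous valuations on the complete Boolean algebra $\mathrm{COpen}(L)$ of compact opens of $L$; the inverse is given by precomposition with the frame homomorphism $\neg\neg:L\to\mathrm{COpen}(L)$.
   Context: A frame is a poset with finite meets and arbitrary joins, binary meets distributing over arbitrary joins; a locale is a frame viewed in the opposite category. $\neg x=\sup\{w:w\wedge x=0\}$. $a\in L$ is a compact open if $\bigvee S\ge a$ implies $\bigvee F\ge a$ for some finite $F\subset S$. $L$ is coherent if compact opens are closed under finite meets (including $1$) and every element is a join of compact opens; regular if $y=\bigvee\{x:\neg x\vee y=1\}$ for all $y$; extremally disconnected if $\neg x\vee\neg\neg x=1$ for all $x$. A Stonean locale is a coherent, regular, extremally disconnected locale (its compact opens are exactly the elements with $a=\neg\neg a$ and form a complete Boolean algebra). A continuous valuation on a lattice is $\nu$ to $[0,\infty)$ with $\nu(0)=0$, $\nu(x)+\nu(y)=\nu(x\vee y)+\nu(x\wedge y)$, monotone, preserving suprema of directed subsets (suprema computed in the lattice in question); a normal valuation on $L$ is a continuous valuation with $\nu(\neg\neg a)=\nu(a)$ for all $a$. *)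

From Stdlib Require Import Reals List.
Open Scope R_scope.

Record frame := Frame {
  carrier :> Type;
  le : carrier -> carrier -> Prop;
  le_refl : forall x, le x x;
  le_trans : forall x y z, le x y -> le y z -> le x z;
  le_antisym : forall x y, le x y -> le y x -> x = y;
  top : carrier;
  top_greatest : forall x, le x top;
  meet : carrier -> carrier -> carrier;
  meet_le_l : forall x y, le (meet x y) x;
  meet_le_r : forall x y, le (meet x y) y;
  meet_glb : forall x y z, le z x -> le z y -> le z (meet x y);
  sup : (carrier -> Prop) -> carrier;
  sup_ub : forall (S : carrier -> Prop) x, S x -> le x (sup S);
  sup_least : forall (S : carrier -> Prop) z, (forall x, S x -> le x z) -> le (sup S) z;
  meet_sup_distr : forall x (S : carrier -> Prop),
      meet x (sup S) = sup (fun y => exists s, S s /\ y = meet x s)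
}.

Arguments le {L} : rename.
Arguments top {L} : rename.
Arguments meet {L} : rename.
Arguments sup {L} : rename.

Section FrameDefs.
Variable L : frame.

Definition bot : L := sup (fun _ => False).
Definition join (x y : L) : L := sup (fun z => z = x \/ z = y).

Definition fneg (x : L) : L := sup (fun w => meet w x = bot).

Definition compact_open (a : L) : Prop :=
  forall S : L -> Prop, le a (sup S) ->
    exists F : list L, (forall y, In y F -> S y) /\ le a (sup (fun y => In y F)).

Definition coherent : Prop :=
  compact_open top /\
  (forall a b, compact_open a -> compact_open b -> compact_open (meet a b)) /\
  (forall x : L, exists S : L -> Prop, (forall a, S a -> compact_open a) /\ x = sup S).

Definition regular : Prop :=
  forall y : L, y = sup (fun x => join (fneg x) y = top).

Definition extremally_disconnected : Prop :=
  forall x : L, join (fneg x) (fneg (fneg x)) = top.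

Definition stonean : Prop := coherent /\ regular /\ extremally_disconnected.

Definition is_lub_in (P S : L -> Prop) (s : L) : Prop :=
  P s /\ (forall x, S x -> le x s) /\ (forall z, P z -> (forall x, S x -> le x z) -> le s z).

Definition is_glb_in (P S : L -> Prop) (s : L) : Prop :=
  P s /\ (forall x, S x -> le s x) /\ (forall z, P z -> (forall x, S x -> le z x) -> le z s).

Definition directed_in (P S : L -> Prop) : Prop :=
  (forall x, S x -> P x) /\ (exists x, S x) /\
  (forall x y, S x -> S y -> exists z, S z /\ le x z /\ le y z).

(* A continuous valuation on the lattice P (a sub-poset of L which is a lattice
   with least element bot); nu is only relevant on P. *)
Definition continuous_valuation_on (P : L -> Prop) (nu : L -> R) : Prop :=
  P bot /\ nu bot = 0 /\
  (forall x, P x -> 0 <= nu x) /\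
  (forall x y j m, P x -> P y ->
      is_lub_in P (fun z => z = x \/ z = y) j ->
      is_glb_in P (fun z => z = x \/ z = y) m ->
      nu x + nu y = nu j + nu m) /\
  (forall x y, P x -> P y -> le x y -> nu x <= nu y) /\
  (forall S s, directed_in P S -> is_lub_in P S s ->
      is_lub (fun r => exists x, S x /\ r = nu x) (nu s)).

Definition continuous_valuation (nu : L -> R) : Prop :=
  continuous_valuation_on (fun _ => True) nu.

Definition normal_valuation (nu : L -> R) : Prop :=
  continuous_valuation nu /\ (forall a, nu (fneg (fneg a)) = nu a).

End FrameDefs.

Arguments bot {L}.
Arguments join {L}.
Arguments fneg {L}.
Arguments compact_open {L}.

From Stdlib Require Import Reals List.

(* In any frame, the regular elements (those with [¬¬a = a]) are exactly the
   image of [¬¬]; among them binary meets are computed in the frame and joins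
   are [¬¬] of joins in the frame, since [¬¬] preserves binary meets and is
   idempotent.  Hence restriction and precomposition with [¬¬] are mutually
   inverse between normal valuations on the frame and continuous valuations on
   its regular elements.  In a Stonean locale the regular elements are exactly
   the compact opens: [¬¬x] is compact because [1 = ¬x ∨ ¬¬x] is compact, and
   a compact [a] is covered by finitely many [x] with [¬x ∨ a = 1] (by
   regularity), which forces [¬a ∨ a = 1], i.e. [¬¬a ≤ a]. *)

Section FrameLemmas.

Variable L : frame.
Implicit Types (a b c w x y z : L) (S T : L -> Prop).

Lemma bot_le x : le bot x.
Proof. apply sup_least; tauto. Qed.

Lemma le_bot x : le x bot -> x = bot.
Proof. intro H; apply le_antisym; [exact H | apply bot_le]. Qed.

Lemma top_le x : le top x -> x = top.
Proof. intro H; apply le_antisym; [apply top_greatest | exact H]. Qed.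

Lemma join_ub_l x y : le x (join x y).
Proof. apply sup_ub; auto. Qed.

Lemma join_ub_r x y : le y (join x y).
Proof. apply sup_ub; auto. Qed.

Lemma join_least x y z : le x z -> le y z -> le (join x y) z.
Proof. intros Hx Hy; apply sup_least; intros w [-> | ->]; assumption. Qed.

Lemma join_mono a b c d : le a c -> le b d -> le (join a b) (join c d).
Proof.
  intros Hac Hbd; apply join_least.
  - apply le_trans with c; [exact Hac | apply join_ub_l].
  - apply le_trans with d; [exact Hbd | apply join_ub_r].
Qed.

Lemma sup_mono S T : (forall x, S x -> T x) -> le (sup S) (sup T).
Proof. intro H; apply sup_least; intros x Hx; apply sup_ub, H, Hx. Qed.

Lemma meet_mono a b c d : le a c -> le b d -> le (meet a b) (meet c d).
Proof.
  intros Hac Hbd; apply meet_glb.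
  - apply le_trans with a; [apply meet_le_l | exact Hac].
  - apply le_trans with b; [apply meet_le_r | exact Hbd].
Qed.

Lemma meet_comm a b : meet a b = meet b a.
Proof. apply le_antisym; apply meet_glb; (apply meet_le_l || apply meet_le_r). Qed.

Lemma meet_assoc a b c : meet (meet a b) c = meet a (meet b c).
Proof.
  apply le_antisym; repeat apply meet_glb;
    eauto using le_trans, meet_le_l, meet_le_r.
Qed.

Lemma meet_top x : meet x top = x.
Proof.
  apply le_antisym; [apply meet_le_l |].
  apply meet_glb; [apply le_refl | apply top_greatest].
Qed.

Lemma meet_sup_bot x S : (forall s, S s -> meet x s = bot) -> meet x (sup S) = bot.
Proof.
  intro H; rewrite meet_sup_distr; apply le_bot, sup_least.
  intros y [s [Hs ->]]; rewrite (H s Hs); apply le_refl.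
Qed.

Lemma meet_join_le a b c : le (meet a (join b c)) (join (meet a b) (meet a c)).
Proof.
  unfold join at 1; rewrite meet_sup_distr; apply sup_least.
  intros y [s [[-> | ->] ->]]; [apply join_ub_l | apply join_ub_r].
Qed.

Lemma meet_join_disjoint a b c : meet a c = bot -> le (meet a (join c b)) b.
Proof.
  intro Hac; eapply le_trans; [apply meet_join_le |].
  apply join_least; [rewrite Hac; apply bot_le | apply meet_le_r].
Qed.

Lemma fneg_meet x : meet (fneg x) x = bot.
Proof.
  rewrite meet_comm; apply meet_sup_bot.
  intros w Hw; rewrite meet_comm; exact Hw.
Qed.

Lemma fneg_intro w x : meet w x = bot -> le w (fneg x).
Proof. intro H; apply sup_ub, H. Qed.

Lemma fneg_anti x y : le x y -> le (fneg y) (fneg x).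
Proof.
  intro Hxy; apply fneg_intro, le_bot; rewrite <- (fneg_meet y).
  apply meet_mono; [apply le_refl | exact Hxy].
Qed.

Lemma le_nn x : le x (fneg (fneg x)).
Proof. apply fneg_intro; rewrite meet_comm; apply fneg_meet. Qed.

Lemma nn_mono x y : le x y -> le (fneg (fneg x)) (fneg (fneg y)).
Proof. intro Hxy; apply fneg_anti, fneg_anti, Hxy. Qed.

Lemma fneg3 x : fneg (fneg (fneg x)) = fneg x.
Proof. apply le_antisym; [apply fneg_anti, le_nn | apply le_nn]. Qed.

Lemma nn_bot : fneg (fneg (@bot L)) = bot.
Proof.
  assert (Hnbot : fneg (@bot L) = top).
  { apply top_le, fneg_intro, le_bot, meet_le_r. }
  rewrite Hnbot, <- (meet_top (fneg top)); apply fneg_meet.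
Qed.

Lemma meet_nn_bot w x : meet w x = bot -> meet w (fneg (fneg x)) = bot.
Proof.
  intro Hwx; apply le_bot; rewrite <- (fneg_meet (fneg x)), (meet_comm (fneg (fneg x))).
  apply meet_mono; [apply fneg_intro, Hwx | apply le_refl].
Qed.

Lemma nn_meet x y : fneg (fneg (meet x y)) = meet (fneg (fneg x)) (fneg (fneg y)).
Proof.
  apply le_antisym.
  { apply meet_glb; apply nn_mono; [apply meet_le_l | apply meet_le_r]. }
  apply fneg_intro; set (f := fneg (meet x y)).
  assert (Hxy : meet (meet f x) y = bot) by (rewrite meet_assoc; apply fneg_meet).
  assert (Hx : meet (meet f (fneg (fneg y))) x = bot).
  { rewrite meet_assoc, (meet_comm _ x), <- meet_assoc; apply meet_nn_bot, Hxy. }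
  rewrite meet_comm, (meet_comm (fneg (fneg x))), <- meet_assoc.
  apply meet_nn_bot, Hx.
Qed.

Lemma list_cover_split S c (F : list L) :
  (forall y, In y F -> S y \/ y = c) ->
  exists G : list L, (forall y, In y G -> S y) /\
    le (sup (fun y => In y F)) (join c (sup (fun y => In y G))).
Proof.
  induction F as [|y F IH]; intro HF.
  - exists nil; split; [simpl; tauto | apply sup_least; simpl; tauto].
  - destruct IH as [G [HG HFG]]; [intros z Hz; apply HF; right; exact Hz |].
    destruct (HF y (or_introl eq_refl)) as [Hy | ->].
    + exists (y :: G); split; [intros z [<- | Hz]; auto |].
      apply sup_least; intros z [<- | Hz].
      * eapply le_trans; [| apply join_ub_r]; apply sup_ub; left; reflexivity.
      * apply le_trans with (sup (fun y => In y F)); [apply sup_ub; exact Hz |].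
        eapply le_trans; [exact HFG |].
        apply join_mono; [apply le_refl | apply sup_mono; right; assumption].
    + exists G; split; [exact HG |].
      apply sup_least; intros z [<- | Hz]; [apply join_ub_l |].
      apply le_trans with (sup (fun y => In y F)); [apply sup_ub; exact Hz | exact HFG].
Qed.

Lemma compact_open_nn x :
  compact_open (@top L) -> extremally_disconnected L -> compact_open (fneg (fneg x)).
Proof.
  intros Htop Hed S HS.
  destruct (Htop (fun y => S y \/ y = fneg x)) as [F [HFS HF]].
  { rewrite <- (Hed x); apply join_least; [apply sup_ub; auto |].
    eapply le_trans; [exact HS | apply sup_mono; auto]. }
  destruct (list_cover_split S (fneg x) F HFS) as [G [HGS HG]].
  exists G; split; [exact HGS |].
  rewrite <- (meet_top (fneg (fneg x))); eapply le_trans.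
  - apply meet_mono; [apply le_refl | eapply le_trans; [exact HF | exact HG]].
  - apply meet_join_disjoint, fneg_meet.
Qed.

Lemma join_top_meet p q a : join p a = top -> join q a = top -> join (meet p q) a = top.
Proof.
  intros Hp Hq; apply top_le.
  eapply le_trans; [apply (meet_glb _ (join p a) (join q a)); rewrite ?Hp, ?Hq; apply le_refl |].
  eapply le_trans; [apply meet_join_le |]; apply join_least.
  - rewrite meet_comm; eapply le_trans; [apply meet_join_le |]; apply join_least.
    + rewrite meet_comm; apply join_ub_l.
    + eapply le_trans; [apply meet_le_r | apply join_ub_r].
  - eapply le_trans; [apply meet_le_r | apply join_ub_r].
Qed.

Lemma exists_disjoint_join_top a (F : list L) :
  (forall x, In x F -> join (fneg x) a = top) ->
  exists y, join y a = top /\ forall x, In x F -> meet y x = bot.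
Proof.
  induction F as [|x0 F IH]; intro HF.
  - exists top; split; [apply top_le, join_ub_l | simpl; tauto].
  - destruct IH as [y [Hya Hy]]; [intros x Hx; apply HF; right; exact Hx |].
    exists (meet (fneg x0) y); split; [apply join_top_meet; auto; apply HF; left; reflexivity |].
    intros x [<- | Hx]; apply le_bot.
    + rewrite <- (fneg_meet x0); apply meet_mono; [apply meet_le_l | apply le_refl].
    + rewrite <- (Hy x Hx); apply meet_mono; [apply meet_le_r | apply le_refl].
Qed.

Lemma compact_open_fixed a : regular L -> compact_open a -> fneg (fneg a) = a.
Proof.
  intros Hreg Ha; apply le_antisym; [| apply le_nn].
  destruct (Ha (fun x => join (fneg x) a = top)) as [F [HF HaF]].
  { rewrite <- (Hreg a); apply le_refl. }
  destruct (exists_disjoint_join_top a F HF) as [y [Hya Hy]].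
  assert (Hyna : le y (fneg a)).
  { apply fneg_intro, le_bot; rewrite <- (meet_sup_bot y _ Hy).
    apply meet_mono; [apply le_refl | exact HaF]. }
  assert (Hnaa : join (fneg a) a = top).
  { apply top_le; rewrite <- Hya; apply join_mono; [exact Hyna | apply le_refl]. }
  rewrite <- (meet_top (fneg (fneg a))), <- Hnaa.
  apply meet_join_disjoint, fneg_meet.
Qed.

Lemma is_lub_in_unique P S s t : is_lub_in L P S s -> is_lub_in L P S t -> s = t.
Proof.
  intros [Ps [Hs Hs']] [Pt [Ht Ht']].
  apply le_antisym; [apply Hs'; assumption | apply Ht'; assumption].
Qed.

Lemma is_glb_in_unique P S s t : is_glb_in L P S s -> is_glb_in L P S t -> s = t.
Proof.
  intros [Ps [Hs Hs']] [Pt [Ht Ht']].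
  apply le_antisym; [apply Ht'; assumption | apply Hs'; assumption].
Qed.

Lemma is_lub_in_sup S : is_lub_in L (fun _ => True) S (sup S).
Proof.
  split; [exact I |]; split; [apply sup_ub |].
  intros z _ Hz; apply sup_least, Hz.
Qed.

Lemma is_glb_in_meet (P : L -> Prop) x y :
  P (meet x y) -> is_glb_in L P (fun z => z = x \/ z = y) (meet x y).
Proof.
  intro Pxy; split; [exact Pxy |]; split.
  - intros z [-> | ->]; [apply meet_le_l | apply meet_le_r].
  - intros z _ Hz; apply meet_glb; apply Hz; auto.
Qed.

End FrameLemmas.

Open Scope R_scope.

Lemma is_lub_ext (E1 E2 : R -> Prop) (m : R) :
  (forall r, E1 r <-> E2 r) -> is_lub E1 m -> is_lub E2 m.
Proof.
  intros HE [Hub Hleast]; split.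
  - intros r Hr; apply Hub, HE, Hr.
  - intros b Hb; apply Hleast; intros r Hr; apply Hb, HE, Hr.
Qed.

Section RegularElements.

Variable L : frame.
Variable P : L -> Prop.
Hypothesis P_nn : forall x, P (fneg (fneg x)).
Hypothesis P_fixed : forall a, P a -> fneg (fneg a) = a.

Lemma P_bot : P bot.
Proof. rewrite <- nn_bot; apply P_nn. Qed.

Lemma P_meet x y : P x -> P y -> P (meet x y).
Proof.
  intros Px Py; rewrite <- (P_fixed x Px), <- (P_fixed y Py), <- nn_meet; apply P_nn.
Qed.

Lemma is_lub_in_nn_sup (S : L -> Prop) : is_lub_in L P S (fneg (fneg (sup S))).
Proof.
  split; [apply P_nn |]; split.
  - intros x Hx; apply le_trans with (sup S); [apply sup_ub, Hx | apply le_nn].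
  - intros z Pz Hz; rewrite <- (P_fixed z Pz); apply nn_mono, sup_least, Hz.
Qed.

Lemma is_lub_in_nn_image (S S' : L -> Prop) s :
  (forall z, S' z <-> exists x, S x /\ z = fneg (fneg x)) ->
  is_lub_in L (fun _ => True) S s -> is_lub_in L P S' (fneg (fneg s)).
Proof.
  intros HS' [_ [Hub Hleast]]; split; [apply P_nn |]; split.
  - intros z Hz; apply HS' in Hz as [x [Hx ->]]; apply nn_mono, Hub, Hx.
  - intros z Pz Hz; rewrite <- (P_fixed z Pz); apply nn_mono, Hleast; [exact I |].
    intros x Hx; apply le_trans with (fneg (fneg x)); [apply le_nn |].
    apply Hz, HS'; eauto.
Qed.

Lemma directed_in_nn_image (Q S : L -> Prop) :
  directed_in L Q S -> directed_in L P (fun z => exists x, S x /\ z = fneg (fneg x)).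
Proof.
  intros [_ [[x Hx] Hdir]]; split; [intros z [y [_ ->]]; apply P_nn |]; split; [eauto |].
  intros a b [x' [Hx' ->]] [y [Hy ->]].
  destruct (Hdir x' y Hx' Hy) as [z [Hz [Hxz Hyz]]].
  exists (fneg (fneg z)); split; [eauto |]; split; apply nn_mono; assumption.
Qed.

Lemma restrict_normal_valuation (nu : L -> R) :
  normal_valuation L nu -> continuous_valuation_on L P nu.
Proof.
  intros [[_ [nu_bot [nu_ge0 [nu_mod [nu_mono nu_cont]]]]] nu_nn].
  split; [exact P_bot |]; split; [exact nu_bot |]; split; [intros x _; apply nu_ge0; exact I |].
  split; [| split].
  - intros x y j m Px Py Hj Hm.
    assert (Ej : j = fneg (fneg (join x y))).
    { eapply is_lub_in_unique; [exact Hj | apply is_lub_in_nn_sup]. }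
    assert (Em : m = meet x y).
    { eapply is_glb_in_unique; [exact Hm | apply is_glb_in_meet, P_meet; assumption]. }
    rewrite Ej, Em, nu_nn; apply nu_mod; try exact I.
    + apply is_lub_in_sup.
    + apply is_glb_in_meet; exact I.
  - intros x y _ _ Hxy; apply nu_mono; trivial.
  - intros S s [_ HS] Hs.
    assert (Es : s = fneg (fneg (sup S))).
    { eapply is_lub_in_unique; [exact Hs | apply is_lub_in_nn_sup]. }
    rewrite Es, nu_nn; apply nu_cont; [split; [intros; exact I | exact HS] | apply is_lub_in_sup].
Qed.

Lemma extend_valuation (mu : L -> R) :
  continuous_valuation_on L P mu -> normal_valuation L (fun x => mu (fneg (fneg x))).
Proof.
  intros [_ [mu_bot [mu_ge0 [mu_mod [mu_mono mu_cont]]]]].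
  split; [| intro a; cbv beta; rewrite fneg3; reflexivity].
  split; [exact I |]; split; [cbv beta; rewrite nn_bot; exact mu_bot |].
  split; [intros x _; apply mu_ge0, P_nn |]; split; [| split].
  - intros x y j m _ _ Hj Hm; cbv beta.
    assert (Em : m = meet x y).
    { eapply is_glb_in_unique; [exact Hm | apply is_glb_in_meet; exact I]. }
    subst m; apply mu_mod; try apply P_nn.
    + apply (is_lub_in_nn_image (fun z => z = x \/ z = y)); [| exact Hj].
      intro z; split; [intros [-> | ->]; eauto | intros [w [[-> | ->] ->]]; auto].
    + rewrite nn_meet; apply is_glb_in_meet; rewrite <- nn_meet; apply P_nn.
  - intros x y _ _ Hxy; apply mu_mono; [apply P_nn | apply P_nn | apply nn_mono, Hxy].
  - intros S s HS Hs; cbv beta.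
    apply (is_lub_ext (fun r => exists z, (exists x, S x /\ z = fneg (fneg x)) /\ r = mu z)).
    { intro r; split; [intros [z [[x [Hx ->]] ->]]; eauto | intros [x [Hx ->]]; eauto]. }
    apply mu_cont; [apply (directed_in_nn_image _ _ HS) |].
    apply (is_lub_in_nn_image S); [reflexivity | exact Hs].
Qed.

End RegularElements.

Theorem mainTheorem16 (L : frame) (HL : stonean L) :
  (forall x : L, compact_open (fneg (fneg x))) /\
  (forall nu : L -> R, normal_valuation L nu ->
      continuous_valuation_on L compact_open nu) /\
  (forall mu : L -> R, continuous_valuation_on L compact_open mu ->
      normal_valuation L (fun x => mu (fneg (fneg x)))) /\
  (forall nu : L -> R, normal_valuation L nu ->
      forall x : L, nu (fneg (fneg x)) = nu x) /\
  (forall mu : L -> R, continuous_valuation_on L compact_open mu ->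
      forall a : L, compact_open a -> mu (fneg (fneg a)) = mu a).
Proof.
  destruct HL as [[top_compact _] [Hreg Hed]].
  assert (CO_nn : forall x : L, compact_open (fneg (fneg x)))
    by (intro x; apply compact_open_nn; assumption).
  assert (CO_fixed : forall a : L, compact_open a -> fneg (fneg a) = a)
    by (intros a Ha; apply compact_open_fixed; assumption).
  split; [exact CO_nn |]; split; [| split; [| split]].
  - exact (restrict_normal_valuation L compact_open CO_nn CO_fixed).
  - exact (extend_valuation L compact_open CO_nn CO_fixed).
  - intros nu [_ nu_nn]; exact nu_nn.
  - intros mu _ a Ha; rewrite (CO_fixed a Ha); reflexivity.
Qed.
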